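(* Let $\mathcal{C}$ be a symmetric monoidal category with discarding $\top$, completely mixed states $\mu$, zero morphisms and normalisation, which has split (co)kernels, satisfies strong pure exclusion, has $\top_A=0\Rightarrow\mu_A=0\Rightarrow 1_A=0$ for all objects $A$, and has kernel composition. Then $\mathcal{C}$ satisfies the pure composition axiom: for all causal pure states $\psi$ of $A\otimes B$ and $\phi$ of $A$, the state $(\overline{\phi}\otimes 1_B)\circ\psi$ and the effect $\overline{\psi}\circ(\phi\otimes 1_B)$ are pure, and $\overline{(\overline{\phi}\otimes 1_B)\circ\psi}=\overline{\psi}\circ(\phi\otimes 1_B)$.
   Context: States: $I\to A$; effects: $A\to I$; scalars $I\to I$; unitors suppressed. Discarding: effects $\top_A$ with $\top_{A\otimes B}=\top_A\otimes\top_B$, $\top_I=1_I$. Completely mixed states: $\mu_A$ with $\mu_{A\otimes B}=\mu_A\otimes\mu_B$, $\mu_I=1_I$. Causal: $\top_B\circ f=\top_A$; co-causal: $f\circ\mu_A=\mu_B$. Zero morphisms: absorbing $0\colon A\to B$. Normalisation: every non-zero state $\rho$ is $\sigma\otimes r$ for a scalar $r$ and a unique causal state $\sigma$ (its normalisation). Pure: $f\colon A\to B$ is pure if $f=0$ or whenever $(1_B\otimes\top_C)\circ g=f$ for $g\colon A\to B\otimes C$, then $g=f\otimes\rho$ for some causal state $\rho$. Trivial object: $1_A=\mu_A\circ\top_A$. Strong pure exclusion: every pure state $\psi$ of a non-trivial object has a non-zero effect $e$ with $e\circ\psi=0$, and every pure effect $\phi$ on a non-trivial object has a non-zero state $\rho$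 with $\phi\circ\rho=0$. Kernel of $f$: $\ker(f)$ with $f\circ g=0$ iff $g=\ker(f)\circ h$ for unique $h$; cokernel dually. Kernels taken causal, cokernels co-causal. Split (co)kernels: every morphism has a causal kernel and a co-causal cokernel; for each causal kernel $k$ there is a unique co-causal cokernel $\overline{k}$ with $\overline{k}\circ k=1$, and $k$ is the unique causal kernel with this property. Under these hypotheses every causal pure state $\psi$ has a unique pure co-causal effect $\overline{\psi}$ with $\overline{\psi}\circ\psi=1_I$; this is extended to all pure states by $\overline{0}=0$ and $\overline{\psi}:=\overline{\phi}\otimes r$ for non-zero pure $\psi$ with normalisation $\phi$ and $r=\top\circ\psi$. Kernel composition: kernels and cokernels are closed under $\otimes$, cokernels send pure states to pure states, and for every causal kernel $k\colon B\to A$ and pure state $\psi$ of $A$, $\overline{\overline{k}\circ\psi}=\overline{\psi}\circ k$. *)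

Set Implicit Arguments.
Unset Strict Implicit.

Record SMC := {
  ob : Type;
  hom : ob -> ob -> Type;
  comp : forall A B C : ob, hom B C -> hom A B -> hom A C;
  idm : forall A : ob, hom A A;
  comp_id_l : forall A B (f : hom A B), comp (idm B) f = f;
  comp_id_r : forall A B (f : hom A B), comp f (idm A) = f;
  comp_assoc : forall A B C D (f : hom A B) (g : hom B C) (h : hom C D),
      comp h (comp g f) = comp (comp h g) f;

  tens : ob -> ob -> ob;
  unit : ob;
  tensm : forall A B C D : ob, hom A B -> hom C D -> hom (tens A C) (tens B D);
  tensm_id : forall A B, tensm (idm A) (idm B) = idm (tens A B);
  tensm_comp : forall A1 A2 A3 B1 B2 B3 (f : hom A1 A2) (f' : hom A2 A3)
      (g : hom B1 B2) (g' : hom B2 B3),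
      tensm (comp f' f) (comp g' g) = comp (tensm f' g') (tensm f g);

  assoc : forall A B C, hom (tens (tens A B) C) (tens A (tens B C));
  assoc_inv : forall A B C, hom (tens A (tens B C)) (tens (tens A B) C);
  lunit : forall A, hom (tens unit A) A;
  lunit_inv : forall A, hom A (tens unit A);
  runit : forall A, hom (tens A unit) A;
  runit_inv : forall A, hom A (tens A unit);
  braid : forall A B, hom (tens A B) (tens B A);

  assoc_iso1 : forall A B C, comp (assoc_inv A B C) (assoc A B C) = idm _;
  assoc_iso2 : forall A B C, comp (assoc A B C) (assoc_inv A B C) = idm _;
  lunit_iso1 : forall A, comp (lunit_inv A) (lunit A) = idm _;
  lunit_iso2 : forall A, comp (lunit A) (lunit_inv A) = idm _;
  runit_iso1 : forall A, comp (runit_inv A) (runit A) = idm _;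
  runit_iso2 : forall A, comp (runit A) (runit_inv A) = idm _;

  assoc_nat : forall A A' B B' C C' (f : hom A A') (g : hom B B') (h : hom C C'),
      comp (assoc A' B' C') (tensm (tensm f g) h)
      = comp (tensm f (tensm g h)) (assoc A B C);
  lunit_nat : forall A B (f : hom A B),
      comp (lunit B) (tensm (idm unit) f) = comp f (lunit A);
  runit_nat : forall A B (f : hom A B),
      comp (runit B) (tensm f (idm unit)) = comp f (runit A);
  braid_nat : forall A A' B B' (f : hom A A') (g : hom B B'),
      comp (braid A' B') (tensm f g) = comp (tensm g f) (braid A B);

  pentagon : forall A B C D,
      comp (assoc A B (tens C D)) (assoc (tens A B) C D)
      = comp (tensm (idm A) (assoc B C D))
             (comp (assoc A (tens B C) D) (tensm (assoc A B C) (idm D)));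
  triangle : forall A B,
      comp (tensm (idm A) (lunit B)) (assoc A unit B) = tensm (runit A) (idm B);
  hexagon : forall A B C,
      comp (assoc B C A) (comp (braid A (tens B C)) (assoc A B C))
      = comp (tensm (idm B) (braid A C))
             (comp (assoc B A C) (tensm (braid A B) (idm C)));
  braid_invol : forall A B, comp (braid B A) (braid A B) = idm (tens A B)
}.

Arguments hom : clear implicits.
Arguments comp {s A B C} _ _.
Arguments idm {s} A.
Arguments tens {s} _ _.
Arguments unit {s}.
Arguments tensm {s A B C D} _ _.
Arguments assoc {s} A B C.
Arguments assoc_inv {s} A B C.
Arguments lunit {s} A.
Arguments lunit_inv {s} A.
Arguments runit {s} A.
Arguments runit_inv {s} A.
Arguments braid {s} A B.

Notation "g ∘ f" := (comp g f) (at level 40, left associativity).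
Notation "f ⊗ g" := (tensm f g) (at level 35).

(** * A symmetric monoidal category equipped with the data of the paper:
    discarding effects [top], completely mixed states [mu] and a chosen
    family of (candidate) zero morphisms [zer]. *)

Record Data := {
  cat :> SMC;
  top : forall A : ob cat, hom cat A unit;
  mu : forall A : ob cat, hom cat unit A;
  zer : forall A B : ob cat, hom cat A B
}.

Arguments top {d} A.
Arguments mu {d} A.
Arguments zer {d} A B.


Definition is_discarding (X : Data) : Prop :=
  (forall A B : ob X, top (tens A B) = lunit unit ∘ (top A ⊗ top B))
  /\ top (@unit X) = idm unit.

Definition is_cmixed (X : Data) : Prop :=
  (forall A B : ob X, mu (tens A B) = (mu A ⊗ mu B) ∘ lunit_inv unit)
  /\ mu (@unit X) = idm unit.

Definition is_zero (X : Data) : Prop :=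
  (forall (A B C : ob X) (f : hom X B C), f ∘ zer A B = zer A C)
  /\ (forall (A B C : ob X) (g : hom X A B), zer B C ∘ g = zer A C)
  /\ (forall (A B C D : ob X) (f : hom X A B), f ⊗ zer C D = zer (tens A C) (tens B D))
  /\ (forall (A B C D : ob X) (f : hom X A B), zer C D ⊗ f = zer (tens C A) (tens D B)).

Definition causal {X : Data} {A B : ob X} (f : hom X A B) : Prop :=
  top B ∘ f = top A.

Definition cocausal {X : Data} {A B : ob X} (f : hom X A B) : Prop :=
  f ∘ mu A = mu B.

Definition stensor {X : Data} {A : ob X} (s : hom X unit A) (r : hom X unit unit)
  : hom X unit A := runit A ∘ (s ⊗ r) ∘ lunit_inv unit.

Definition etensor {X : Data} {A : ob X} (e : hom X A unit) (r : hom X unit unit)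
  : hom X A unit := lunit unit ∘ (e ⊗ r) ∘ runit_inv A.

Definition has_normalisation (X : Data) : Prop :=
  forall (A : ob X) (rho : hom X unit A), rho <> zer unit A ->
    exists sigma : hom X unit A,
      causal sigma /\ (exists r, rho = stensor sigma r)
      /\ (forall sigma' : hom X unit A,
            causal sigma' -> (exists r, rho = stensor sigma' r) -> sigma' = sigma).

Definition pure {X : Data} {A B : ob X} (f : hom X A B) : Prop :=
  f = zer A B \/
  forall (C : ob X) (g : hom X A (tens B C)),
    runit B ∘ (idm B ⊗ top C) ∘ g = f ->
    exists rho : hom X unit C, causal rho /\ g = (f ⊗ rho) ∘ runit_inv A.

Definition trivial_ob {X : Data} (A : ob X) : Prop :=
  idm A = mu A ∘ top A.

Definition strong_pure_exclusion (X : Data) : Prop :=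
  forall A : ob X, ~ trivial_ob A ->
    (forall psi : hom X unit A, pure psi ->
        exists e : hom X A unit, e <> zer A unit /\ e ∘ psi = zer unit unit)
    /\ (forall phi : hom X A unit, pure phi ->
        exists rho : hom X unit A, rho <> zer unit A /\ phi ∘ rho = zer unit unit).

Definition zero_chain (X : Data) : Prop :=
  forall A : ob X,
    (top A = zer A unit -> mu A = zer unit A) /\ (mu A = zer unit A -> idm A = zer A A).

Definition is_kernel {X : Data} {A B K : ob X} (f : hom X A B) (k : hom X K A) : Prop :=
  f ∘ k = zer K B /\
  forall (C : ob X) (g : hom X C A), f ∘ g = zer C B -> exists! h : hom X C K, g = k ∘ h.

Definition is_cokernel {X : Data} {A B Q : ob X} (f : hom X A B) (c : hom X B Q) : Prop :=
  c ∘ f = zer A Q /\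
  forall (D : ob X) (g : hom X B D), g ∘ f = zer A D -> exists! h : hom X Q D, g = h ∘ c.

Definition kernel_mor {X : Data} {K A : ob X} (k : hom X K A) : Prop :=
  exists (B : ob X) (f : hom X A B), is_kernel f k.

Definition cokernel_mor {X : Data} {A Q : ob X} (c : hom X A Q) : Prop :=
  exists (B : ob X) (f : hom X B A), is_cokernel f c.

Definition split_cok {X : Data} {K A : ob X} (k : hom X K A) (c : hom X A K) : Prop :=
  cokernel_mor c /\ cocausal c /\ c ∘ k = idm K.

Definition has_split_kernels (X : Data) : Prop :=
  (forall (A B : ob X) (f : hom X A B),
      exists (K : ob X) (k : hom X K A), is_kernel f k /\ causal k)
  /\ (forall (A B : ob X) (f : hom X A B),
      exists (Q : ob X) (c : hom X B Q), is_cokernel f c /\ cocausal c)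
  /\ (forall (K A : ob X) (k : hom X K A), kernel_mor k -> causal k ->
      exists c : hom X A K,
        split_cok k c
        /\ (forall c' : hom X A K, split_cok k c' -> c' = c)
        /\ (forall k' : hom X K A, kernel_mor k' -> causal k' -> c ∘ k' = idm K -> k' = k)).

(** [e] is "the" effect ψ̄ of a causal pure state ψ: pure, co-causal, ψ̄ ∘ ψ = 1. *)
Definition bar_causal {X : Data} {A : ob X} (psi : hom X unit A) (e : hom X A unit) : Prop :=
  pure e /\ cocausal e /\ e ∘ psi = idm unit.

(** Extension of the overline to all pure states: 0̄ = 0, and for non-zero ψ
    with normalisation σ and r = top ∘ ψ, ψ̄ = σ̄ ⊗ r. *)
Definition is_bar {X : Data} {A : ob X} (psi : hom X unit A) (e : hom X A unit) : Prop :=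
  (psi = zer unit A /\ e = zer A unit)
  \/ (psi <> zer unit A /\
      exists (sigma : hom X unit A) (sigmab : hom X A unit),
        causal sigma /\ psi = stensor sigma (top A ∘ psi)
        /\ bar_causal sigma sigmab /\ e = etensor sigmab (top A ∘ psi)).

Definition kernel_composition (X : Data) : Prop :=
  (forall (K A K' A' : ob X) (k : hom X K A) (k' : hom X K' A'),
      kernel_mor k -> causal k -> kernel_mor k' -> causal k' -> kernel_mor (k ⊗ k'))
  /\ (forall (A Q A' Q' : ob X) (c : hom X A Q) (c' : hom X A' Q'),
      cokernel_mor c -> cocausal c -> cokernel_mor c' -> cocausal c' ->
      cokernel_mor (c ⊗ c'))
  /\ (forall (A Q : ob X) (c : hom X A Q) (psi : hom X unit A),
      cokernel_mor c -> cocausal c -> pure psi -> pure (c ∘ psi))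
  /\ (forall (B A : ob X) (k : hom X B A) (kb : hom X A B),
      kernel_mor k -> causal k -> split_cok k kb ->
      forall (psi : hom X unit A) (e : hom X A unit),
        pure psi -> is_bar psi e -> is_bar (kb ∘ psi) (e ∘ k)).

Definition pure_composition (X : Data) : Prop :=
  forall (A B : ob X) (psi : hom X unit (tens A B)) (phi : hom X unit A)
         (psib : hom X (tens A B) unit) (phib : hom X A unit),
    causal psi -> pure psi -> causal phi -> pure phi ->
    bar_causal psi psib -> bar_causal phi phib ->
    pure (lunit B ∘ (phib ⊗ idm B) ∘ psi)
    /\ pure (psib ∘ (phi ⊗ idm B) ∘ lunit_inv B)
    /\ is_bar (lunit B ∘ (phib ⊗ idm B) ∘ psi) (psib ∘ (phi ⊗ idm B) ∘ lunit_inv B).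

(* A non-zero pure state y is a scalar multiple of a causal kernel state I -> A: the kernel of
   the cokernel of y has a trivial domain, by strong pure exclusion. So a causal pure state phi
   is itself a causal kernel, and its bar, which vanishes on the kernel of the split cokernel of
   phi, is that split cokernel. Whiskering with 1_B, (phi ⊗ 1_B) ∘ λ⁻¹ is again a causal kernel,
   split by λ ∘ (phib ⊗ 1_B), and kernel composition gives both the purity of the state
   λ ∘ (phib ⊗ 1_B) ∘ psi and the bar identity. The effect is pure since bars of pure states
   are pure: they vanish on the same kernel, and every effect doing so factors through a
   scalar multiple of the split cokernel. *)

From Stdlib Require Import Classical.
Set Implicit Arguments.
Unset Strict Implicit.

Ltac assoc_right := repeat rewrite <- comp_assoc.

Lemma comp_assoc_rew (X : SMC) A B C D (a : hom X C D) (b : hom X B C) (c : hom X B D)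
    (x : hom X A B) :
  a ∘ b = c -> a ∘ (b ∘ x) = c ∘ x.
Proof. intros E; rewrite comp_assoc, E; reflexivity. Qed.

Arguments comp_assoc_rew {X A B C D a b c} x _.

Lemma tensm_comp_idr (X : SMC) A B C D (f : hom X B C) (g : hom X A B) :
  (f ⊗ idm D) ∘ (g ⊗ idm D) = (f ∘ g) ⊗ idm D.
Proof. rewrite <- tensm_comp, comp_id_l; reflexivity. Qed.

Lemma tensm_comp_idl (X : SMC) A B C D (f : hom X B C) (g : hom X A B) :
  (idm D ⊗ f) ∘ (idm D ⊗ g) = idm D ⊗ (f ∘ g).
Proof. rewrite <- tensm_comp, comp_id_l; reflexivity. Qed.

Lemma tensm_split_l (X : SMC) A B C D (f : hom X A B) (g : hom X C D) :
  f ⊗ g = (idm B ⊗ g) ∘ (f ⊗ idm C).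
Proof. rewrite <- tensm_comp, comp_id_l, comp_id_r; reflexivity. Qed.

Lemma tensm_split_r (X : SMC) A B C D (f : hom X A B) (g : hom X C D) :
  f ⊗ g = (f ⊗ idm D) ∘ (idm A ⊗ g).
Proof. rewrite <- tensm_comp, comp_id_l, comp_id_r; reflexivity. Qed.

Lemma split_epi (X : SMC) A B C (f g : hom X B C) (i : hom X A B) (j : hom X B A) :
  i ∘ j = idm B -> f ∘ i = g ∘ i -> f = g.
Proof.
  intros Eij E.
  rewrite <- (comp_id_r f), <- (comp_id_r g), <- Eij, !comp_assoc, E; reflexivity.
Qed.

Lemma split_mono (X : SMC) A B C (f g : hom X A B) (i : hom X B C) (j : hom X C B) :
  j ∘ i = idm B -> i ∘ f = i ∘ g -> f = g.
Proof.
  intros Eji E.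
  rewrite <- (comp_id_l f), <- (comp_id_l g), <- Eji, <- !comp_assoc, E; reflexivity.
Qed.

Lemma lunit_inv_nat (X : SMC) A B (f : hom X A B) :
  (idm unit ⊗ f) ∘ lunit_inv A = lunit_inv B ∘ f.
Proof.
  apply (split_mono (lunit_iso1 B)).
  rewrite !comp_assoc, lunit_nat, lunit_iso2, comp_id_l, <- comp_assoc, lunit_iso2, comp_id_r.
  reflexivity.
Qed.

Lemma runit_inv_nat (X : SMC) A B (f : hom X A B) :
  (f ⊗ idm unit) ∘ runit_inv A = runit_inv B ∘ f.
Proof.
  apply (split_mono (runit_iso1 B)).
  rewrite !comp_assoc, runit_nat, runit_iso2, comp_id_l, <- comp_assoc, runit_iso2, comp_id_r.
  reflexivity.
Qed.

Lemma tensm_idl_inj (X : SMC) A B (f g : hom X A B) : idm unit ⊗ f = idm unit ⊗ g -> f = g.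
Proof.
  intros E. apply (split_epi (lunit_iso2 A)).
  rewrite <- !lunit_nat, E; reflexivity.
Qed.

Lemma lunit_tens_assoc (X : SMC) (A B : ob X) :
  lunit (tens A B) ∘ assoc unit A B = lunit A ⊗ idm B.
Proof.
  apply tensm_idl_inj.
  apply (split_epi (i := assoc unit (tens unit A) B ∘ (assoc unit unit A ⊗ idm B))
    (j := (assoc_inv unit unit A ⊗ idm B) ∘ assoc_inv unit (tens unit A) B)).
  { assoc_right. rewrite (comp_assoc_rew _ (tensm_comp_idr _ _ _)).
    rewrite assoc_iso2, tensm_id, comp_id_l, assoc_iso2. reflexivity. }
  rewrite <- tensm_comp_idl. assoc_right.
  rewrite <- pentagon, (comp_assoc_rew _ (triangle _ _)), <- tensm_id, <- assoc_nat.
  rewrite !comp_assoc, <- assoc_nat. assoc_right. rewrite tensm_comp_idr, triangle.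
  reflexivity.
Qed.

Lemma lunit_eq_runit (X : SMC) : lunit (@unit X) = runit unit.
Proof.
  assert (E1 : idm unit ⊗ lunit (@unit X) = lunit (tens unit unit)).
  { apply (split_mono (lunit_iso1 unit)). rewrite lunit_nat. reflexivity. }
  assert (E2 : lunit (@unit X) ⊗ idm unit = runit unit ⊗ idm unit).
  { rewrite <- lunit_tens_assoc, <- triangle, E1. reflexivity. }
  apply (split_epi (runit_iso2 (tens unit unit))).
  rewrite <- !runit_nat, E2. reflexivity.
Qed.

Lemma lunit_inv_eq_runit_inv (X : SMC) : lunit_inv (@unit X) = runit_inv unit.
Proof.
  rewrite <- (comp_id_r (lunit_inv unit)), <- (runit_iso2 (s := X) unit), comp_assoc,
    <- lunit_eq_runit, lunit_iso1, comp_id_l.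
  reflexivity.
Qed.

Lemma stensorE (X : Data) (A : ob X) (s : hom X unit A) (r : hom X unit unit) :
  stensor s r = s ∘ r.
Proof.
  unfold stensor. rewrite tensm_split_r. assoc_right.
  rewrite lunit_inv_nat, lunit_inv_eq_runit_inv, !comp_assoc, runit_nat. assoc_right.
  rewrite (comp_assoc_rew _ (runit_iso2 _)), comp_id_l. reflexivity.
Qed.

Lemma etensorE (X : Data) (A : ob X) (e : hom X A unit) (r : hom X unit unit) :
  etensor e r = r ∘ e.
Proof.
  unfold etensor. rewrite tensm_split_l, !comp_assoc, lunit_nat, lunit_eq_runit. assoc_right.
  rewrite (comp_assoc _ _ (runit unit)), runit_nat. assoc_right.
  rewrite runit_iso2, comp_id_r. reflexivity.
Qed.

Lemma pure_effect_intro (X : Data) (A : ob X) (E : hom X A unit) :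
  (forall (Y : ob X) (h : hom X A Y), top Y ∘ h = E ->
     exists rho : hom X unit Y, causal rho /\ h = rho ∘ E) ->
  pure E.
Proof.
  intros HE. right. intros C g Hg.
  assert (Hh : top C ∘ (lunit C ∘ g) = E).
  { rewrite <- Hg, <- lunit_eq_runit, lunit_nat, comp_assoc. reflexivity. }
  destruct (HE _ _ Hh) as (rho & rc & Er). exists rho. split; [exact rc|].
  rewrite <- (comp_id_l g), <- (lunit_iso1 C), <- comp_assoc, Er, tensm_split_l.
  assoc_right. rewrite runit_inv_nat, <- lunit_inv_eq_runit_inv, comp_assoc, <- lunit_inv_nat.
  assoc_right. reflexivity.
Qed.

Lemma is_bar_zer_l (X : Data) (A : ob X) (e : hom X A unit) :
  is_bar (zer unit A) e -> e = zer A unit.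
Proof. intros [[_ Ee]|[nz _]]; [exact Ee|contradiction]. Qed.

Section Operational.

Variable X : Data.

Hypothesis Hdisc : is_discarding X.
Hypothesis Hmixed : is_cmixed X.
Hypothesis Hzero : is_zero X.
Hypothesis Hnorm : has_normalisation X.
Hypothesis Hsplit : has_split_kernels X.
Hypothesis Hexcl : strong_pure_exclusion X.
Hypothesis Hchain : zero_chain X.
Hypothesis Hkcomp : kernel_composition X.

Lemma top_unit : top (@unit X) = idm unit.
Proof. exact (proj2 Hdisc). Qed.

Lemma top_tens (A B : ob X) : top (tens A B) = lunit unit ∘ (top A ⊗ top B).
Proof. exact (proj1 Hdisc A B). Qed.

Lemma mu_unit : mu (@unit X) = idm unit.
Proof. exact (proj2 Hmixed). Qed.

Lemma mu_tens (A B : ob X) : mu (tens A B) = (mu A ⊗ mu B) ∘ lunit_inv unit.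
Proof. exact (proj1 Hmixed A B). Qed.

Lemma comp_zer_r (A B C : ob X) (f : hom X B C) : f ∘ zer A B = zer A C.
Proof. apply Hzero. Qed.

Lemma comp_zer_l (A B C : ob X) (g : hom X A B) : zer B C ∘ g = zer A C.
Proof. apply Hzero. Qed.

Lemma tensm_zer_r (A B C D : ob X) (f : hom X A B) : f ⊗ zer C D = zer (tens A C) (tens B D).
Proof. apply Hzero. Qed.

Lemma causal_kernel_exists (A B : ob X) (f : hom X A B) :
  exists (K : ob X) (k : hom X K A), is_kernel f k /\ causal k.
Proof. apply Hsplit. Qed.

Lemma cokernel_exists (A B : ob X) (f : hom X A B) :
  exists (Q : ob X) (c : hom X B Q), is_cokernel f c /\ cocausal c.
Proof. apply Hsplit. Qed.

Lemma split_cok_exists (K A : ob X) (k : hom X K A) :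
  kernel_mor k -> causal k -> exists c : hom X A K, split_cok k c.
Proof.
  intros kmor kc. destruct (proj2 (proj2 Hsplit) K A k kmor kc) as (c & Hc & _).
  exists c; exact Hc.
Qed.

Lemma zer_of_unit_zer : idm (@unit X) = zer unit unit ->
  forall (A B : ob X) (f : hom X A B), f = zer A B.
Proof.
  intros E A B f.
  rewrite <- (comp_id_l f), <- (runit_iso2 B), <- comp_assoc, <- runit_inv_nat, E,
    tensm_zer_r, comp_zer_l, comp_zer_r.
  reflexivity.
Qed.

(* [f] factors through the causal kernel of [top Y], whose domain therefore has zero discarding
   and so, by the zero chain, zero identity. *)
Lemma zer_of_top_comp (A Y : ob X) (f : hom X A Y) : top Y ∘ f = zer A unit -> f = zer A Y.
Proof.
  intros Hf.
  destruct (causal_kernel_exists (top Y)) as (K & k & [Hk0 Hk] & kc).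
  destruct (Hk _ f Hf) as (h & -> & _).
  assert (topK : top K = zer K unit) by (rewrite <- kc; exact Hk0).
  destruct (Hchain K) as [mu_zer idm_zer].
  rewrite <- (comp_id_r k), (idm_zer (mu_zer topK)), comp_zer_r, comp_zer_l.
  reflexivity.
Qed.


Lemma is_kernel_idm (A : ob X) : is_kernel (zer A A) (idm A).
Proof.
  split; [apply comp_zer_l|].
  intros C g _. exists g. split.
  - rewrite comp_id_l; reflexivity.
  - intros h ->. rewrite comp_id_l; reflexivity.
Qed.

Lemma is_cokernel_idm (A : ob X) : is_cokernel (zer A A) (idm A).
Proof.
  split; [apply comp_zer_r|].
  intros C g _. exists g. split.
  - rewrite comp_id_r; reflexivity.
  - intros h ->. rewrite comp_id_r; reflexivity.
Qed.

Lemma kernel_mor_comp_iso (K K' A : ob X) (k : hom X K A) (i : hom X K' K) (j : hom X K K') :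
  kernel_mor k -> j ∘ i = idm K' -> i ∘ j = idm K -> kernel_mor (k ∘ i).
Proof.
  intros (B & f & Hk0 & Hk) Eji Eij. exists B, f. split.
  - rewrite comp_assoc, Hk0, comp_zer_l; reflexivity.
  - intros C g Hg. destruct (Hk C g Hg) as (h & Eh & Uh).
    exists (j ∘ h). split.
    + rewrite Eh. assoc_right. rewrite (comp_assoc_rew _ Eij), comp_id_l. reflexivity.
    + intros h' Eh'. rewrite <- comp_assoc in Eh'.
      rewrite (Uh _ Eh'), comp_assoc, Eji, comp_id_l. reflexivity.
Qed.

Lemma cokernel_mor_comp_iso (Q Q' A : ob X) (c : hom X A Q) (i : hom X Q Q') (j : hom X Q' Q) :
  cokernel_mor c -> j ∘ i = idm Q -> i ∘ j = idm Q' -> cokernel_mor (i ∘ c).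
Proof.
  intros (B & f & Hc0 & Hc) Eji Eij. exists B, f. split.
  - rewrite <- comp_assoc, Hc0, comp_zer_r; reflexivity.
  - intros D g Hg. destruct (Hc D g Hg) as (h & Eh & Uh).
    exists (h ∘ j). split.
    + rewrite Eh. assoc_right. rewrite (comp_assoc_rew _ Eji), comp_id_l. reflexivity.
    + intros h' Eh'. rewrite comp_assoc in Eh'.
      rewrite (Uh _ Eh'). assoc_right. rewrite Eij, comp_id_r. reflexivity.
Qed.

Lemma is_cokernel_of_kernel (A B Q K : ob X) (f : hom X B A) (c : hom X A Q) (k : hom X K A) :
  is_cokernel f c -> is_kernel c k -> is_cokernel k c.
Proof.
  intros [Hc0 Hc] [Hk0 Hk]. split; [exact Hk0|].
  intros D g Hg. apply Hc.
  destruct (Hk _ f Hc0) as (f' & -> & _).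
  rewrite comp_assoc, Hg, comp_zer_l. reflexivity.
Qed.

Lemma kernel_mor_tensm (K A K' A' : ob X) (k : hom X K A) (k' : hom X K' A') :
  kernel_mor k -> causal k -> kernel_mor k' -> causal k' -> kernel_mor (k ⊗ k').
Proof. apply Hkcomp. Qed.

Lemma cokernel_mor_tensm (A Q A' Q' : ob X) (c : hom X A Q) (c' : hom X A' Q') :
  cokernel_mor c -> cocausal c -> cokernel_mor c' -> cocausal c' -> cokernel_mor (c ⊗ c').
Proof. apply Hkcomp. Qed.

Lemma pure_cokernel_comp (A Q : ob X) (c : hom X A Q) (psi : hom X unit A) :
  cokernel_mor c -> cocausal c -> pure psi -> pure (c ∘ psi).
Proof. apply Hkcomp. Qed.

Lemma is_bar_split_cok_comp (B A : ob X) (k : hom X B A) (kb : hom X A B)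
    (psi : hom X unit A) (e : hom X A unit) :
  kernel_mor k -> causal k -> split_cok k kb -> pure psi -> is_bar psi e ->
  is_bar (kb ∘ psi) (e ∘ k).
Proof. intros; eapply Hkcomp; eauto. Qed.

Lemma causal_comp (A B C : ob X) (f : hom X A B) (g : hom X B C) :
  causal f -> causal g -> causal (g ∘ f).
Proof. unfold causal; intros cf cg. rewrite comp_assoc, cg, cf; reflexivity. Qed.

Lemma top_comp_causal (A B C : ob X) (f : hom X A B) (g : hom X C A) :
  causal f -> top B ∘ (f ∘ g) = top A ∘ g.
Proof. unfold causal; intros cf. rewrite comp_assoc, cf; reflexivity. Qed.

Lemma trivial_causal_state (C : ob X) (x : hom X unit C) :
  trivial_ob C -> causal x -> x = mu C.
Proof.
  unfold trivial_ob, causal; intros triv cx.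
  rewrite <- (comp_id_l x), triv, <- comp_assoc, cx, top_unit, comp_id_r. reflexivity.
Qed.

(* Were [C] non-trivial, strong pure exclusion would give a non-zero effect [e] killing
   [kb ∘ y]; then [e ∘ kb] factors through [c], which vanishes on [k]. *)
Lemma pure_state_kernel_trivial (A Q C : ob X) (y : hom X unit A) (c : hom X A Q)
    (k : hom X C A) :
  pure y -> is_cokernel y c -> is_kernel c k -> causal k -> trivial_ob C.
Proof.
  intros ypure [_ Hc] Hk kc.
  assert (kmor : kernel_mor k) by (exists Q, c; exact Hk).
  destruct (split_cok_exists kmor kc) as (kb & Hkb & kbco & Ekb).
  destruct (classic (trivial_ob C)) as [triv|ntriv]; [exact triv|exfalso].
  destruct ((proj1 (Hexcl ntriv)) (kb ∘ y)) as (e & e_nz & Ee).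
  { apply pure_cokernel_comp; assumption. }
  apply e_nz.
  rewrite comp_assoc in Ee. destruct (Hc _ _ Ee) as (g & Eg & _).
  rewrite <- (comp_id_r e), <- Ekb, comp_assoc, Eg, <- comp_assoc, (proj1 Hk), comp_zer_r.
  reflexivity.
Qed.

Lemma pure_state_kernel (A : ob X) (y : hom X unit A) :
  pure y -> y <> zer unit A ->
  exists kappa : hom X unit A, kernel_mor kappa /\ causal kappa /\ y = kappa ∘ (top A ∘ y).
Proof.
  intros ypure y_nz.
  destruct (cokernel_exists y) as (Q & c & Hc & _).
  destruct (causal_kernel_exists c) as (C & k & Hk & kc).
  pose proof (pure_state_kernel_trivial ypure Hc Hk kc) as triv.
  destruct Hk as [Hk0 Hk]. destruct (Hk _ y (proj1 Hc)) as (h & Eh & _).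
  assert (h_nz : h <> zer unit C)
    by (intros E; apply y_nz; rewrite Eh, E, comp_zer_r; reflexivity).
  destruct (Hnorm h_nz) as (x & xc & [r Er] & _). rewrite stensorE in Er.
  assert (Ex : x = mu C) by exact (trivial_causal_state triv xc).
  assert (Eyr : y = (k ∘ x) ∘ r) by (rewrite Eh, Er, comp_assoc; reflexivity).
  assert (kxc : causal (k ∘ x)) by exact (causal_comp xc kc).
  exists (k ∘ x). split; [|split; [exact kxc|]].
  - apply kernel_mor_comp_iso with (j := top C).
    + exists Q, c; split; assumption.
    + exact (eq_trans xc top_unit).
    + rewrite Ex; symmetry; exact triv.
  - rewrite Eyr at 2. rewrite (top_comp_causal _ kxc), top_unit, comp_id_l.
    exact Eyr.
Qed.

Lemma is_bar_zer_r (A : ob X) (psi : hom X unit A) : is_bar psi (zer A unit) -> psi = zer unit A.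
Proof.
  intros [[Epsi _]|[_ (sigma & sigmab & _ & Epsi & (_ & _ & Esig) & Ee)]]; [exact Epsi|].
  rewrite stensorE in Epsi. rewrite etensorE in Ee.
  set (r := top A ∘ psi) in *.
  assert (Er : r = zer unit unit).
  { rewrite <- (comp_id_r r), <- Esig, comp_assoc, <- Ee, comp_zer_l. reflexivity. }
  rewrite Epsi, Er, comp_zer_r. reflexivity.
Qed.

Section KernelState.

Variables (A D : ob X) (kappa : hom X unit A) (kappab : hom X A unit) (k1 : hom X D A).
Hypothesis kappa_causal : causal kappa.
Hypothesis kappa_split : split_cok kappa kappab.
Hypothesis k1_kernel : is_kernel kappab k1.
Hypothesis k1_causal : causal k1.

Lemma split_cok_factor (Y : ob X) (h : hom X A Y) :
  h ∘ k1 = zer D Y -> h = (h ∘ kappa) ∘ kappab.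
Proof.
  destruct kappa_split as [(B0 & f0 & Hcok) [_ Ekk]].
  destruct (is_cokernel_of_kernel Hcok k1_kernel) as [_ Hc].
  intros Hh. destruct (Hc _ _ Hh) as (g & -> & _).
  rewrite <- (comp_assoc kappa kappab g), Ekk, comp_id_r. reflexivity.
Qed.

Lemma pure_of_comp_kernel_zer (E : hom X A unit) : E ∘ k1 = zer D unit -> pure E.
Proof.
  intros HE. destruct (classic (E = zer A unit)) as [E0|E_nz]; [left; exact E0|].
  apply pure_effect_intro. intros Y h Eh.
  assert (Hh : h = (h ∘ kappa) ∘ kappab).
  { apply split_cok_factor, zer_of_top_comp. rewrite comp_assoc, Eh. exact HE. }
  assert (s_nz : h ∘ kappa <> zer unit Y).
  { intros E0. apply E_nz. rewrite <- Eh, Hh, E0, comp_zer_l, comp_zer_r. reflexivity. }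
  destruct (Hnorm s_nz) as (rho & rc & [r Er] & _). rewrite stensorE in Er.
  exists rho. split; [exact rc|].
  assert (ErE : E = r ∘ kappab).
  { rewrite <- Eh, Hh, Er. assoc_right. rewrite (top_comp_causal _ rc), top_unit, comp_id_l.
    reflexivity. }
  rewrite Hh, Er, ErE, comp_assoc. reflexivity.
Qed.

Lemma bar_causal_of_split_cok : bar_causal kappa kappab.
Proof.
  destruct kappa_split as (_ & kappab_co & Ekk).
  split; [|split; assumption].
  apply pure_of_comp_kernel_zer, (proj1 k1_kernel).
Qed.

(* [kappab · r] is a bar of [y]; by kernel composition along [k1] with split cokernel [k1b],
   [k1b ∘ y] has the zero bar, hence is zero, and then so is its other bar [e ∘ k1]. *)
Lemma is_bar_comp_kernel_zer (y : hom X unit A) (e : hom X A unit) :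
  pure y -> y = kappa ∘ (top A ∘ y) -> is_bar y e -> e ∘ k1 = zer D unit.
Proof.
  intros ypure Ey Hye.
  assert (k1mor : kernel_mor k1) by (exists unit, kappab; exact k1_kernel).
  destruct (split_cok_exists k1mor k1_causal) as (k1b & Hk1b).
  destruct (classic (y = zer unit A)) as [y0|y_nz].
  { rewrite y0 in Hye. rewrite (is_bar_zer_l Hye), comp_zer_l. reflexivity. }
  assert (Hy : is_bar y (etensor kappab (top A ∘ y))).
  { right. split; [exact y_nz|]. exists kappa, kappab.
    rewrite stensorE. split; [exact kappa_causal|].
    split; [exact Ey|]. split; [exact bar_causal_of_split_cok|reflexivity]. }
  assert (Hk1y : k1b ∘ y = zer unit D).
  { apply is_bar_zer_r.
    pose proof (is_bar_split_cok_comp k1mor k1_causal Hk1b ypure Hy) as H.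
    rewrite etensorE, <- comp_assoc, (proj1 k1_kernel), comp_zer_r in H. exact H. }
  pose proof (is_bar_split_cok_comp k1mor k1_causal Hk1b ypure Hye) as H.
  rewrite Hk1y in H. exact (is_bar_zer_l H).
Qed.

End KernelState.

Lemma split_cok_kernel_exists (A : ob X) (kappa : hom X unit A) :
  kernel_mor kappa -> causal kappa ->
  exists (kappab : hom X A unit) (D : ob X) (k1 : hom X D A),
    split_cok kappa kappab /\ is_kernel kappab k1 /\ causal k1.
Proof.
  intros kmor kc. destruct (split_cok_exists kmor kc) as (kappab & Hsplit_k).
  destruct (causal_kernel_exists kappab) as (D & k1 & Hk1 & k1c).
  exists kappab, D, k1. auto.
Qed.

Lemma is_bar_pure (A : ob X) (y : hom X unit A) (e : hom X A unit) :
  pure y -> is_bar y e -> pure e.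
Proof.
  intros ypure Hye.
  destruct (classic (y = zer unit A)) as [y0|y_nz].
  { rewrite y0 in Hye. left; exact (is_bar_zer_l Hye). }
  destruct (pure_state_kernel ypure y_nz) as (kappa & kmor & kc & Ey).
  destruct (split_cok_kernel_exists kmor kc) as (kappab & D & k1 & Hk & Hk1 & k1c).
  apply (pure_of_comp_kernel_zer Hk Hk1).
  exact (is_bar_comp_kernel_zer kc Hk Hk1 k1c ypure Ey Hye).
Qed.

Lemma is_bar_causal (A : ob X) (psi : hom X unit A) (e : hom X A unit) :
  causal psi -> bar_causal psi e -> is_bar psi e.
Proof.
  intros pc Hb. destruct (classic (psi = zer unit A)) as [psi0|psi_nz].
  - assert (deg : idm (@unit X) = zer unit unit).
    { destruct Hb as (_ & _ & Eb). rewrite <- Eb, psi0, comp_zer_r. reflexivity. }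
    left. split; apply zer_of_unit_zer; exact deg.
  - right. split; [exact psi_nz|]. exists psi, e.
    unfold causal in pc. rewrite stensorE, etensorE, pc, top_unit, comp_id_r, comp_id_l.
    auto.
Qed.

Lemma causal_pure_state_kernel (A : ob X) (phi : hom X unit A) :
  causal phi -> pure phi -> phi <> zer unit A -> kernel_mor phi.
Proof.
  intros phic phip phi_nz.
  destruct (pure_state_kernel phip phi_nz) as (kappa & kmor & _ & Ephi).
  unfold causal in phic. rewrite phic, top_unit, comp_id_r in Ephi.
  rewrite Ephi; exact kmor.
Qed.

(* [phib] vanishes on the kernel of the split cokernel of [phi], hence factors through it. *)
Lemma split_cok_of_bar_causal (A : ob X) (phi : hom X unit A) (phib : hom X A unit) :
  pure phi -> causal phi -> kernel_mor phi -> bar_causal phi phib -> split_cok phi phib.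
Proof.
  intros phip phic phimor Hb.
  destruct (split_cok_kernel_exists phimor phic) as (kappab & D & k1 & Hk & Hk1 & k1c).
  assert (Ephi : phi = phi ∘ (top A ∘ phi)).
  { unfold causal in phic. rewrite phic, top_unit, comp_id_r. reflexivity. }
  pose proof (is_bar_comp_kernel_zer phic Hk Hk1 k1c phip Ephi (is_bar_causal phic Hb)) as Hv.
  rewrite (split_cok_factor Hk Hk1 Hv), (proj2 (proj2 Hb)), comp_id_l.
  exact Hk.
Qed.

Lemma causal_idm (A : ob X) : causal (idm A).
Proof. apply comp_id_r. Qed.

Lemma cocausal_idm (A : ob X) : cocausal (idm A).
Proof. apply comp_id_l. Qed.

Lemma cocausal_comp (A B C : ob X) (f : hom X A B) (g : hom X B C) :
  cocausal f -> cocausal g -> cocausal (g ∘ f).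
Proof. unfold cocausal; intros cf cg. rewrite <- comp_assoc, cf, cg; reflexivity. Qed.

Lemma causal_tensm (A B C D : ob X) (f : hom X A B) (g : hom X C D) :
  causal f -> causal g -> causal (f ⊗ g).
Proof.
  unfold causal; intros cf cg.
  rewrite !top_tens, <- comp_assoc, <- tensm_comp, cf, cg. reflexivity.
Qed.

Lemma cocausal_tensm (A B C D : ob X) (f : hom X A B) (g : hom X C D) :
  cocausal f -> cocausal g -> cocausal (f ⊗ g).
Proof.
  unfold cocausal; intros cf cg.
  rewrite !mu_tens, comp_assoc, <- tensm_comp, cf, cg. reflexivity.
Qed.

Lemma causal_lunit_inv (A : ob X) : causal (lunit_inv A).
Proof.
  unfold causal. rewrite top_tens, top_unit, <- comp_assoc, lunit_inv_nat, comp_assoc,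
    lunit_iso2, comp_id_l.
  reflexivity.
Qed.

Lemma cocausal_lunit (A : ob X) : cocausal (lunit A).
Proof.
  unfold cocausal. rewrite mu_tens, mu_unit, comp_assoc, lunit_nat, <- comp_assoc,
    lunit_iso2, comp_id_r.
  reflexivity.
Qed.

Lemma kernel_mor_idm (A : ob X) : kernel_mor (idm A).
Proof. exists A, (zer A A); apply is_kernel_idm. Qed.

Lemma cokernel_mor_idm (A : ob X) : cokernel_mor (idm A).
Proof. exists A, (zer A A); apply is_cokernel_idm. Qed.

Section StateWhisker.

Variables (A B : ob X) (phi : hom X unit A) (phib : hom X A unit).

Lemma kernel_mor_state_whisker :
  kernel_mor phi -> causal phi -> kernel_mor ((phi ⊗ idm B) ∘ lunit_inv B).
Proof.
  intros phimor phic. apply kernel_mor_comp_iso with (j := lunit B).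
  - apply kernel_mor_tensm; auto using kernel_mor_idm, causal_idm.
  - apply lunit_iso2.
  - apply lunit_iso1.
Qed.

Lemma causal_state_whisker : causal phi -> causal ((phi ⊗ idm B) ∘ lunit_inv B).
Proof.
  intros phic. apply causal_comp; auto using causal_lunit_inv, causal_tensm, causal_idm.
Qed.

Lemma split_cok_state_whisker :
  split_cok phi phib -> split_cok ((phi ⊗ idm B) ∘ lunit_inv B) (lunit B ∘ (phib ⊗ idm B)).
Proof.
  intros (phibmor & phibco & Ephi). split; [|split].
  - apply cokernel_mor_comp_iso with (j := lunit_inv B).
    + apply cokernel_mor_tensm; auto using cokernel_mor_idm, cocausal_idm.
    + apply lunit_iso1.
    + apply lunit_iso2.
  - apply cocausal_comp; auto using cocausal_lunit, cocausal_tensm, cocausal_idm.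
  - assoc_right. rewrite (comp_assoc_rew _ (tensm_comp_idr _ _ _)), Ephi, tensm_id, comp_id_l.
    apply lunit_iso2.
Qed.

End StateWhisker.

Lemma pure_composition_holds : pure_composition X.
Proof.
  intros A B psi phi psib phib psic psip phic phip Hpsib Hphib.
  destruct (classic (idm (@unit X) = zer unit unit)) as [deg|nondeg].
  { pose proof (zer_of_unit_zer deg) as all_zer.
    split; [left; apply all_zer|]. split; [left; apply all_zer|]. left; split; apply all_zer. }
  assert (phi_nz : phi <> zer unit A).
  { intros E. apply nondeg. unfold causal in phic.
    rewrite <- top_unit, <- phic, E, comp_zer_r. reflexivity. }
  pose proof (causal_pure_state_kernel phic phip phi_nz) as phimor.
  pose proof (split_cok_of_bar_causal phip phic phimor Hphib) as phisplit.
  pose proof (kernel_mor_state_whisker B phimor phic) as kmor.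
  pose proof (causal_state_whisker B phic) as kc.
  pose proof (split_cok_state_whisker B phisplit) as ksplit.
  pose proof ksplit as (kbmor & kbco & _).
  assert (Hstate : pure (lunit B ∘ (phib ⊗ idm B) ∘ psi))
    by exact (pure_cokernel_comp kbmor kbco psip).
  pose proof (is_bar_split_cok_comp kmor kc ksplit psip (is_bar_causal psic Hpsib)) as Hbar.
  rewrite comp_assoc in Hbar.
  split; [exact Hstate|]. split; [exact (is_bar_pure Hstate Hbar)|exact Hbar].
Qed.

End Operational.

Theorem mainTheorem9 (X : Data) :
  is_discarding X -> is_cmixed X -> is_zero X -> has_normalisation X ->
  has_split_kernels X -> strong_pure_exclusion X -> zero_chain X ->
  kernel_composition X ->
  pure_composition X.
Proof. intros; apply pure_composition_holds; assumption. Qed.
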